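(* Let $\Gamma=(V,E)$ be a graph, for each $v\in V$ let $C_v$ be a left LCM monoid, and let $C=\Gamma_{v\in V}C_v$. If $x,y\in C_v$ for some $v\in V$, then $C_vx\cap C_vy=\emptyset$ if and only if $Cx\cap Cy=\emptyset$. Moreover, if $C_vx\cap C_vy=C_vz$ with $z\in C_v$, then $Cx\cap Cy=Cz$.
   Context: A graph $\Gamma=(V,E)$ has vertex set $V$ and irreflexive symmetric edge relation $E$. The graph product $\Gamma_{v\in V}C_v$ of pairwise disjoint monoids $C_v$ is the quotient of their free product by the congruence generated by all $(mn,nm)$ with $m\in C_u$, $n\in C_v$, $(u,v)\in E$; each $C_v$ is identified with its image in $C$. A left LCM monoid is a right cancellative monoid in which the intersection of any two principal left ideals is empty or principal. *)

From Stdlib Require Import List Relations.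
Import ListNotations.
Set Implicit Arguments.

Record monoid := Monoid {
  mcar :> Type;
  mmul : mcar -> mcar -> mcar;
  mone : mcar;
  mmulA : forall a b c, mmul a (mmul b c) = mmul (mmul a b) c;
  mmul1l : forall a, mmul mone a = a;
  mmulr1 : forall a, mmul a mone = a
}.
Arguments mmul {m} _ _.

Definition in_lideal {M : monoid} (x w : M) : Prop := exists a : M, w = mmul a x.

Definition right_cancellative (M : monoid) : Prop :=
  forall a b c : M, mmul a c = mmul b c -> a = b.

Definition left_LCM (M : monoid) : Prop :=
  right_cancellative M /\
  forall x y : M,
    (forall w : M, ~ (in_lideal x w /\ in_lideal y w)) \/
    (exists z : M, forall w : M, in_lideal x w /\ in_lideal y w <-> in_lideal z w).

(* Graph products.  Vertices V, edge relation E, vertex monoids C v.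
   The disjoint union of the C v is the sigma type {v : V & C v};
   the free monoid on it is list of letters. *)
Section GraphProduct.
Variables (V : Type) (E : V -> V -> Prop) (C : V -> monoid).

Definition letter := {v : V & mcar (C v)}.
Definition word := list letter.

Definition ltr {v : V} (a : C v) : letter := existT (fun u => mcar (C u)) v a.

Inductive gp_step : word -> word -> Prop :=
  | gp_mul : forall (l r : word) (v : V) (a b : C v),
      gp_step (l ++ ltr a :: ltr b :: r) (l ++ ltr (mmul a b) :: r)
  | gp_one : forall (l r : word) (v : V),
      gp_step (l ++ ltr (mone (C v)) :: r) (l ++ r)
  | gp_comm : forall (l r : word) (u v : V) (m : C u) (n : C v),
      E u v -> gp_step (l ++ ltr m :: ltr n :: r) (l ++ ltr n :: ltr m :: r).

(* The congruence on the free monoid generated by these relations;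
   the graph product C = Γ_{v ∈ V} C_v is word modulo gp_eq,
   with multiplication induced by concatenation. *)
Definition gp_eq : word -> word -> Prop := clos_refl_sym_trans word gp_step.

Definition gp_of {v : V} (x : C v) : word := [ltr x].

Definition gp_in_lideal (x w : word) : Prop := exists u : word, gp_eq w (u ++ x).

End GraphProduct.

(* For each vertex v there is a map [vtail v] from words to C_v, constant on
   classes of the graph product, such that [vtail v (w ++ [x]) = vtail v w * x]
   for x in C_v and w = w' * vtail v w in C: it reads off the last v-syllable
   of a reduced form of w that can be commuted to its end.  Hence w lies in C x
   iff vtail v w lies in C_v x, and both claims follow.

   To see that [vtail v] is well defined, a word acts letter by letter on the
   family of its projections onto pairs of non-adjacent vertices.  These
   projections determine a reduced word up to commutations, and the effect of
   appending a letter on them can be computed from the projections alone, so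
   the action respects the defining relations. *)

From Stdlib Require Import List Relations Classical ClassicalEpsilon Eqdep FunctionalExtensionality.
Import ListNotations.

Local Notation dec := excluded_middle_informative.

Section GraphProductTail.

Variables (V : Type) (E : V -> V -> Prop).
Hypothesis E_sym : forall u v, E u v -> E v u.
Hypothesis E_irr : forall v, ~ E v v.

(* [isolated x r]: the first vertex of [r] not adjacent to [x] differs from
   [x], so a letter at [x] cannot be commuted through [r] onto another one. *)
Fixpoint isolated (x : V) (r : list V) : Prop :=
  match r with
  | [] => True
  | y :: r' => (E x y /\ isolated x r') \/ (~ E x y /\ y <> x)
  end.

Fixpoint reduced_verts (r : list V) : Prop :=
  match r with [] => True | x :: r' => isolated x r' /\ reduced_verts r' end.

Lemma isolated_notin x r : ~ In x r -> isolated x r.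
Proof.
  induction r as [|a r IH]; simpl; auto. intros Hn.
  destruct (classic (E x a)); [left | right]; split; auto.
Qed.

Lemma isolated_remove x a u b :
  isolated x (a ++ u :: b) -> Forall (E u) b -> isolated x (a ++ b).
Proof.
  induction a as [|y a IH]; simpl.
  - intros [[_ Hf]|[Hxu _]] Hb; auto. apply isolated_notin. intro Hin.
    rewrite Forall_forall in Hb. apply Hxu, E_sym, Hb, Hin.
  - intros [[H1 H2]|[H1 H2]] Hb; [left; split; auto | right; auto].
Qed.

Lemma reduced_verts_remove a u b :
  reduced_verts (a ++ u :: b) -> Forall (E u) b -> reduced_verts (a ++ b).
Proof.
  induction a as [|x a IH]; simpl; [tauto|].
  intros [Hf Hn] Hb; split; [eapply isolated_remove; eauto | eauto].
Qed.

Lemma isolated_snoc y r x :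
  isolated y r -> (Forall (E y) r -> x <> y) -> isolated y (r ++ [x]).
Proof.
  induction r as [|a r IH]; simpl; intros H H0.
  - destruct (classic (E y x)); [left | right]; auto.
  - destruct H as [[H1 H2]|[H1 H2]]; [left; split; [exact H1|] | right; auto].
    apply IH; [exact H2|]. intro Hf; apply H0; constructor; auto.
Qed.

Lemma reduced_verts_snoc r x : reduced_verts r ->
  (forall a b, r = a ++ x :: b -> Forall (E x) b -> False) ->
  reduced_verts (r ++ [x]).
Proof.
  induction r as [|a r IH]; simpl.
  - intros _ _; split; auto.
  - intros [Hf Hn] H. split.
    + apply isolated_snoc; auto. intros Hall Heq. subst x. apply (H [] r); auto.
    + apply IH; auto. intros a0 b Heq Hb. apply (H (a :: a0) b); auto.
      simpl; congruence.
Qed.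

Lemma isolated_adj_prefix u m b : Forall (E u) m -> ~ isolated u (m ++ u :: b).
Proof.
  induction m as [|x m IH]; simpl; intros Hm.
  - intros [[H _]|[_ H]]; [apply (E_irr u) | apply H]; auto.
  - inversion Hm; subst. intros [[_ H]|[H _]]; [eapply IH | ]; eauto.
Qed.

Lemma reduced_verts_last_unique a u b : reduced_verts (a ++ u :: b) -> Forall (E u) b ->
  forall a' b', a ++ b = a' ++ u :: b' -> Forall (E u) b' -> False.
Proof.
  induction a as [|x a IH]; simpl; intros H Hb a' b' Heq Hb'.
  - subst b. rewrite Forall_forall in Hb. apply (E_irr u), Hb.
    apply in_or_app; right; left; auto.
  - destruct a' as [|y a1]; simpl in Heq; inversion Heq; subst.
    + destruct H as [Hf _]. apply Forall_app in Hb' as [Ha _].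
      eapply isolated_adj_prefix; eauto.
    + destruct H as [_ H]. eapply IH; eauto.
Qed.

Variable C : V -> monoid.

Local Notation letter := (letter C).
Local Notation word := (word C).

Definition lvert (l : letter) : V := projT1 l.

Local Notation adj_all u B := (Forall (fun l => E u (lvert l)) B).

Lemma ltr_inj u (t t' : C u) : ltr C t = ltr C t' -> t = t'.
Proof. apply inj_pairT2. Qed.

Lemma gp_eq_app_r (w1 w2 s : word) : gp_eq E w1 w2 -> gp_eq E (w1 ++ s) (w2 ++ s).
Proof.
  induction 1 as [w1 w2 H| | |]; [|apply rst_refl|apply rst_sym|eapply rst_trans]; eauto.
  apply rst_step. destruct H; rewrite <- !app_assoc; constructor; auto.
Qed.

Lemma gp_eq_mul_last (l : word) u (a b : C u) :
  gp_eq E (l ++ [ltr C a; ltr C b]) (l ++ [ltr C (mmul a b)]).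
Proof. apply rst_step, (gp_mul E l []). Qed.

Lemma gp_eq_one_last (l : word) u : gp_eq E (l ++ [ltr C (mone (C u))]) l.
Proof. rewrite <- (app_nil_r l) at 2. apply rst_step, (gp_one E l []). Qed.

Lemma gp_eq_move_last (A B : word) u (t : C u) :
  adj_all u B -> gp_eq E (A ++ ltr C t :: B) (A ++ B ++ [ltr C t]).
Proof.
  revert A. induction B as [|[u' n] B IH]; intros A HB; [apply rst_refl|].
  inversion HB as [|? ? Hu' HB']; subst.
  eapply rst_trans; [apply rst_step, (gp_comm E A B u u' t n Hu')|].
  specialize (IH (A ++ [ltr C n]) HB'). rewrite <- !app_assoc in IH. exact IH.
Qed.

(** * Projections onto pairs of non-adjacent vertices *)

Definition pstate := V -> V -> list letter.

Definition on_pair (y z : V) (l : letter) : bool :=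
  if dec (lvert l = y \/ lvert l = z) then true else false.

Definition proj (w : word) : pstate := fun y z =>
  if dec (E y z) then [] else filter (on_pair y z) w.

(* On projections of a reduced word: [t] is a letter at [u] that commutes to
   the end of the word (see [ends_with_projP]). *)
Definition ends_with (u : V) (t : C u) (P : pstate) : Prop :=
  forall x, ~ E u x -> exists l, P u x = l ++ [ltr C t].

Definition last_syl (P : pstate) (u : V) : option (C u) :=
  match dec (exists t, ends_with u t P) with
  | left H => Some (proj1_sig (constructive_indefinite_description _ H))
  | right _ => None
  end.

Definition update (u : V) (f : list letter -> list letter) (P : pstate) : pstate :=
  fun y z => if dec ((y = u \/ z = u) /\ ~ E y z) then f (P y z) else P y z.

(* How appending [a] changes the projections involving [u], given their
   common last letter [o] (if any). *)
Definition append_op {u : V} (a : C u) (o : option (C u)) : list letter -> list letter :=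
  match o with
  | Some t => if dec (mmul t a = mone (C u)) then @removelast letter
              else fun l => removelast l ++ [ltr C (mmul t a)]
  | None => if dec (a = mone (C u)) then fun l => l else fun l => l ++ [ltr C a]
  end.

Definition act (l : letter) (P : pstate) : pstate :=
  match l with existT _ u a => update u (append_op a (last_syl P u)) P end.

Definition nontrivial (l : letter) : Prop :=
  match l with existT _ u a => a <> mone (C u) end.

Definition reduced (w : word) : Prop :=
  Forall nontrivial w /\ reduced_verts (map lvert w).

Lemma ends_with_unique u t t' P : ends_with u t P -> ends_with u t' P -> t = t'.
Proof.
  intros H1 H2. destruct (H1 u (E_irr u)) as [l1 e1], (H2 u (E_irr u)) as [l2 e2].
  rewrite e1 in e2. apply app_inj_tail in e2 as [_ e2]. apply ltr_inj; auto.
Qed.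

Lemma last_syl_Some P u t : ends_with u t P -> last_syl P u = Some t.
Proof.
  intros H. unfold last_syl. destruct (dec _) as [H'|H']; [|exfalso; eauto].
  destruct (constructive_indefinite_description _ H') as [t' Ht']; simpl.
  f_equal. eapply ends_with_unique; eauto.
Qed.

Lemma last_syl_None P u : (forall t, ~ ends_with u t P) -> last_syl P u = None.
Proof.
  intros H. unfold last_syl. destruct (dec _) as [[t Ht]|]; [exfalso; eapply H|]; eauto.
Qed.

Lemma last_syl_SomeP P u t : last_syl P u = Some t -> ends_with u t P.
Proof.
  unfold last_syl. destruct (dec _) as [H'|H']; [|discriminate].
  destruct (constructive_indefinite_description _ H'); simpl. intros Heq; inversion Heq; subst; auto.
Qed.

Lemma last_syl_NoneP P u : last_syl P u = None -> forall t, ~ ends_with u t P.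
Proof. unfold last_syl. destruct (dec _); [discriminate|eauto]. Qed.

Lemma update_ext u f g P : (forall l, f l = g l) -> update u f P = update u g P.
Proof.
  intros H. extensionality y; extensionality z. unfold update. destruct (dec _); auto.
Qed.

Lemma update_id u P : update u (fun l => l) P = P.
Proof. extensionality y; extensionality z. unfold update. destruct (dec _); auto. Qed.

Lemma update_comp u f g P : update u f (update u g P) = update u (fun l => f (g l)) P.
Proof. extensionality y; extensionality z. unfold update. destruct (dec _); auto. Qed.

Lemma update_comm u u' f g P : E u u' ->
  update u f (update u' g P) = update u' g (update u f P).
Proof.
  intros Huu. extensionality y; extensionality z. unfold update.
  destruct (dec ((y = u \/ z = u) /\ ~ E y z)) as [[H1 H2]|H1];
  destruct (dec ((y = u' \/ z = u') /\ ~ E y z)) as [[H3 H4]|H3]; auto.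
  exfalso. destruct H1 as [->| ->]; destruct H3 as [->| ->];
    solve [apply (E_irr u'); auto | apply H2; auto].
Qed.

Lemma ends_with_update_adj u u' f P t : E u u' ->
  ends_with u t (update u' f P) <-> ends_with u t P.
Proof.
  intros Huu. unfold ends_with, update.
  split; intros H x Hx; specialize (H x Hx);
    destruct (dec _) as [[[e|e] _]|_]; subst; auto;
    exfalso; solve [apply (E_irr u'); auto | apply Hx; auto].
Qed.

Lemma last_syl_update_adj u u' f P : E u u' -> last_syl (update u' f P) u = last_syl P u.
Proof.
  intros Huu. destruct (last_syl P u) eqn:H.
  - apply last_syl_Some, ends_with_update_adj, last_syl_SomeP; auto.
  - apply last_syl_None. intros t Ht. apply ends_with_update_adj in Ht; auto.
    eapply last_syl_NoneP; eauto.
Qed.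

Lemma ends_with_update_self u f P t :
  (forall x, ~ E u x -> exists l, f (P u x) = l ++ [ltr C t]) ->
  ends_with u t (update u f P).
Proof.
  intros H x Hx. unfold update. destruct (dec _) as [_|n]; auto.
  exfalso; apply n; split; auto.
Qed.

Lemma on_pair_true y z l : lvert l = y \/ lvert l = z -> on_pair y z l = true.
Proof. unfold on_pair. destruct (dec _); tauto. Qed.

Lemma on_pair_false y z l : ~ (lvert l = y \/ lvert l = z) -> on_pair y z l = false.
Proof. unfold on_pair. destruct (dec _); tauto. Qed.

Lemma filter_on_pair_nil y z B :
  (forall l, In l B -> lvert l <> y /\ lvert l <> z) -> filter (on_pair y z) B = [].
Proof.
  induction B as [|l B IH]; simpl; intros H; auto.
  rewrite on_pair_false; [apply IH; auto|]. destruct (H l); [left|]; tauto.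
Qed.

Lemma filter_on_pair_all y z M :
  (forall l, In l M -> lvert l = y \/ lvert l = z) -> filter (on_pair y z) M = M.
Proof.
  induction M as [|l M IH]; simpl; intros H; auto.
  rewrite on_pair_true; auto. f_equal; auto.
Qed.

Lemma adj_all_avoids u B y z : adj_all u B -> (y = u \/ z = u) -> ~ E y z ->
  forall l, In l B -> lvert l <> y /\ lvert l <> z.
Proof.
  intros HB Hyz Hn l Hl. rewrite Forall_forall in HB. specialize (HB l Hl).
  destruct Hyz; subst; split; intro e; rewrite e in HB;
    solve [apply (E_irr u); auto | apply Hn; auto].
Qed.

Lemma proj_replace u A l B M : adj_all u B -> lvert l = u ->
  (forall m, In m M -> lvert m = u) ->
  proj (A ++ M ++ B) = update u (fun k => removelast k ++ M) (proj (A ++ l :: B)).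
Proof.
  intros HB Hl HM. extensionality y; extensionality z.
  unfold update, proj. rewrite !filter_app; simpl.
  destruct (dec ((y = u \/ z = u) /\ ~ E y z)) as [[Hyz Hn]|Hno].
  - destruct (dec (E y z)); [contradiction|].
    rewrite (filter_on_pair_nil y z B) by (apply (adj_all_avoids u); auto).
    rewrite (filter_on_pair_all y z M)
      by (intros m Hm; rewrite (HM m Hm); destruct Hyz; auto).
    rewrite on_pair_true by (rewrite Hl; destruct Hyz; auto).
    rewrite removelast_last, app_nil_r. reflexivity.
  - destruct (dec (E y z)); auto.
    rewrite (filter_on_pair_nil y z M).
    + rewrite on_pair_false; auto. intros [e|e]; apply Hno; split; auto; [left|right]; congruence.
    + intros m Hm. rewrite HM by auto. split; intro e; subst; apply Hno; auto.
Qed.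

Lemma proj_remove u A l B : adj_all u B -> lvert l = u ->
  proj (A ++ B) = update u (@removelast letter) (proj (A ++ l :: B)).
Proof.
  intros HB Hl. rewrite (update_ext u _ (fun k => removelast k ++ [])).
  - apply (proj_replace u A l B []); auto. intros m [].
  - intros; rewrite app_nil_r; auto.
Qed.

Lemma proj_snoc u w l : lvert l = u ->
  proj (w ++ [l]) = update u (fun k => k ++ [l]) (proj w).
Proof.
  intros Hl. extensionality y; extensionality z.
  unfold update, proj. rewrite filter_app. simpl.
  destruct (dec ((y = u \/ z = u) /\ ~ E y z)) as [[Hyz Hn]|Hno];
  destruct (dec (E y z)); auto; try contradiction.
  - rewrite on_pair_true; auto. rewrite Hl; destruct Hyz; auto.
  - rewrite on_pair_false; [apply app_nil_r|].
    intros [e|e]; apply Hno; split; auto; [left|right]; congruence.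
Qed.

Lemma ends_with_proj u t A B : adj_all u B -> ends_with u t (proj (A ++ ltr C t :: B)).
Proof.
  intros HB x Hx. exists (filter (on_pair u x) A). unfold proj.
  destruct (dec (E u x)); [contradiction|].
  rewrite filter_app. simpl. rewrite on_pair_true by (left; reflexivity).
  rewrite (filter_on_pair_nil u x B); auto. apply (adj_all_avoids u); auto.
Qed.

Lemma last_nonadj_split u w : (exists l, In l w /\ ~ E u (lvert l)) ->
  exists A m B, w = A ++ m :: B /\ ~ E u (lvert m) /\ adj_all u B.
Proof.
  induction w as [|l w IH] using rev_ind; [intros [l [[] _]]|].
  intros [l' [Hin Hd]]. destruct (classic (E u (lvert l))) as [He|Hn].
  - destruct IH as [A [m [B [-> [Hm HB]]]]].
    + exists l'. split; auto. apply in_app_or in Hin as [Hin|[<-|[]]]; tauto.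
    + exists A, m, (B ++ [l]). rewrite <- app_assoc.
      repeat split; auto. apply Forall_app; auto.
  - exists w, l, []. auto.
Qed.

Lemma ends_with_projP u t w : ends_with u t (proj w) ->
  exists A B, w = A ++ ltr C t :: B /\ adj_all u B.
Proof.
  intros H. destruct (H u (E_irr u)) as [l0 e0].
  assert (Hin : In (ltr C t) w).
  { unfold proj in e0. destruct (dec (E u u)); [exfalso; eapply E_irr; eauto|].
    assert (Hf : In (ltr C t) (filter (on_pair u u) w))
      by (rewrite e0; apply in_or_app; right; left; auto).
    apply filter_In in Hf; tauto. }
  destruct (last_nonadj_split u w) as [A [m [B [-> [Hm HB]]]]].
  { exists (ltr C t); split; auto. }
  destruct (H (lvert m) Hm) as [l1 e1].
  unfold proj in e1. destruct (dec (E u (lvert m))); [contradiction|].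
  rewrite filter_app in e1. simpl in e1. rewrite on_pair_true in e1 by (right; reflexivity).
  rewrite (filter_on_pair_nil u (lvert m) B) in e1 by (apply (adj_all_avoids u); auto).
  apply app_inj_tail in e1 as [_ ->]. exists A, B. auto.
Qed.

(** * The action of letters on projections of reduced words *)

Lemma reduced_remove_last u t w : reduced w -> ends_with u t (proj w) ->
  forall t', ~ ends_with u t' (update u (@removelast letter) (proj w)).
Proof.
  intros [_ Hr] Ht t' Ht'. apply ends_with_projP in Ht as [A [B [-> HB]]].
  rewrite <- (proj_remove u A (ltr C t) B) in Ht' by auto.
  apply ends_with_projP in Ht' as [A' [B' [e' HB']]].
  rewrite map_app in Hr. simpl in Hr.
  apply (reduced_verts_last_unique (map lvert A) u (map lvert B) Hr)
    with (a' := map lvert A') (b' := map lvert B').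
  - apply Forall_map; auto.
  - rewrite <- !map_app, e', map_app. reflexivity.
  - apply Forall_map; auto.
Qed.

Lemma reduced_last_nontrivial u t w : reduced w -> ends_with u t (proj w) ->
  t <> mone (C u).
Proof.
  intros [Hn _] Ht. apply ends_with_projP in Ht as [A [B [-> HB]]].
  apply Forall_app in Hn as [_ Hn]. inversion Hn; auto.
Qed.

Lemma act_ltr u (a : C u) P : act (ltr C a) P = update u (append_op a (last_syl P u)) P.
Proof. reflexivity. Qed.

Lemma act_reduced_no_last u (a : C u) W : reduced W -> last_syl (proj W) u = None ->
  a <> mone (C u) -> reduced (W ++ [ltr C a]).
Proof.
  intros [Hn Hna] Ht Ha. split; [apply Forall_app; split; auto|].
  rewrite map_app. apply reduced_verts_snoc; auto.
  intros a0 b0 e Hb0. apply map_eq_app in e as [A [B' [-> [<- e3]]]].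
  apply map_eq_cons in e3 as [[u' t'] [B [-> [e5 <-]]]].
  unfold lvert in e5; simpl in e5. subst u'.
  apply (last_syl_NoneP _ _ Ht t'), ends_with_proj, Forall_map, Hb0.
Qed.

Lemma act_reduced W l : reduced W ->
  exists W', reduced W' /\ gp_eq E (W ++ [l]) W' /\ act l (proj W) = proj W'.
Proof.
  intros Hr. destruct l as [u a]. change (existT _ u a) with (ltr C a). rewrite act_ltr.
  destruct (last_syl (proj W) u) as [t|] eqn:Ht; simpl.
  - apply last_syl_SomeP, ends_with_projP in Ht as [A [B [-> HB]]].
    destruct Hr as [Hn Hna]. apply Forall_app in Hn as [HnA HnB]. inversion HnB; subst.
    rewrite map_app in Hna; simpl in Hna.
    assert (Hmove : gp_eq E ((A ++ ltr C t :: B) ++ [ltr C a])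
                            ((A ++ B) ++ [ltr C (mmul t a)])).
    { eapply rst_trans; [apply gp_eq_app_r, gp_eq_move_last, HB|].
      rewrite <- !app_assoc. pose proof (gp_eq_mul_last (A ++ B) u t a) as Hm.
      rewrite <- !app_assoc in Hm. exact Hm. }
    destruct (dec (mmul t a = mone (C u))) as [Hz|Hnz].
    + exists (A ++ B). repeat split.
      * apply Forall_app; auto.
      * rewrite map_app. eapply reduced_verts_remove; eauto. apply Forall_map; auto.
      * rewrite Hz in Hmove. eapply rst_trans; [exact Hmove | apply gp_eq_one_last].
      * symmetry; apply proj_remove; auto.
    + exists (A ++ ltr C (mmul t a) :: B). repeat split.
      * apply Forall_app; split; auto.
      * rewrite map_app; auto.
      * eapply rst_trans; [exact Hmove|]. rewrite <- app_assoc.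
        apply rst_sym, gp_eq_move_last, HB.
      * symmetry; apply (proj_replace u A (ltr C t) B [_]); auto.
        intros m [<-|[]]; reflexivity.
  - destruct (dec (a = mone (C u))) as [->|Ha].
    + exists W. split; [exact Hr | split; [apply gp_eq_one_last | apply update_id]].
    + exists (W ++ [ltr C a]). split; [apply act_reduced_no_last; auto | split].
      * apply rst_refl.
      * symmetry; apply proj_snoc; reflexivity.
Qed.

Lemma act_one W u : reduced W -> act (ltr C (mone (C u))) (proj W) = proj W.
Proof.
  intros HW. rewrite act_ltr. destruct (last_syl (proj W) u) as [t|] eqn:Ht; simpl.
  - apply last_syl_SomeP in Ht. rewrite mmulr1.
    destruct (dec _) as [e|_]; [exfalso; eapply reduced_last_nontrivial; eauto|].
    apply ends_with_projP in Ht as [A [B [-> HB]]].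
    rewrite <- (proj_replace u A (ltr C t) B [ltr C t]); auto.
    intros m [<-|[]]; reflexivity.
  - destruct (dec _) as [_|n]; [apply update_id | exfalso; apply n; auto].
Qed.

Lemma act_mul W u (a b : C u) : reduced W ->
  act (ltr C b) (act (ltr C a) (proj W)) = act (ltr C (mmul a b)) (proj W).
Proof.
  intros HW. rewrite !act_ltr.
  destruct (last_syl (proj W) u) as [t|] eqn:Ht; simpl.
  - apply last_syl_SomeP in Ht.
    destruct (dec (mmul t a = mone (C u))) as [Hz|Hnz].
    + rewrite (last_syl_None _ u) by (apply (reduced_remove_last u t W); auto). simpl.
      rewrite mmulA, Hz, mmul1l.
      destruct (dec (b = mone (C u))); [apply update_id | apply update_comp].
    + rewrite (last_syl_Some _ u (mmul t a))
        by (apply ends_with_update_self; intros; eexists; reflexivity).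
      simpl. rewrite mmulA, update_comp.
      destruct (dec _); apply update_ext; intros l; rewrite removelast_last; reflexivity.
  - destruct (dec (a = mone (C u))) as [->|Ha].
    + rewrite update_id, Ht, mmul1l. reflexivity.
    + rewrite (last_syl_Some _ u a)
        by (apply ends_with_update_self; intros; eexists; reflexivity).
      simpl. rewrite update_comp.
      destruct (dec _); apply update_ext; intros l; rewrite removelast_last; reflexivity.
Qed.

Lemma act_comm u u' (m : C u) (n : C u') P : E u u' ->
  act (ltr C n) (act (ltr C m) P) = act (ltr C m) (act (ltr C n) P).
Proof.
  intros Huu. rewrite !act_ltr.
  rewrite (last_syl_update_adj u' u), (last_syl_update_adj u u') by auto.
  apply update_comm, E_sym, Huu.
Qed.

(** * The state of a word and its last syllable at a vertex *)

Definition state (w : word) : pstate := fold_left (fun P l => act l P) w (proj []).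

Lemma state_snoc w l : state (w ++ [l]) = act l (state w).
Proof. unfold state. rewrite fold_left_app. reflexivity. Qed.

Lemma state_reduced w : exists W, reduced W /\ gp_eq E w W /\ state w = proj W.
Proof.
  induction w as [|l w IH] using rev_ind.
  - exists []. repeat split; simpl; auto. apply rst_refl.
  - destruct IH as [W [HW [eW sW]]].
    destruct (act_reduced W l HW) as [W' [HW' [eW' sW']]].
    exists W'. split; [exact HW' | split].
    + eapply rst_trans; [apply gp_eq_app_r, eW | exact eW'].
    + rewrite state_snoc, sW; auto.
Qed.

Lemma state_gp_step w1 w2 : gp_step E w1 w2 -> state w1 = state w2.
Proof.
  intros H. destruct H as [l r u a b|l r u|l r u u' m n Huu];
    unfold state; rewrite !fold_left_app; simpl; f_equal; fold (state l);
    destruct (state_reduced l) as [W [HW [_ ->]]].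
  - apply act_mul; auto.
  - apply act_one; auto.
  - apply act_comm; auto.
Qed.

Lemma state_gp_eq w1 w2 : gp_eq E w1 w2 -> state w1 = state w2.
Proof. induction 1; auto using state_gp_step; congruence. Qed.

Definition vtail (v : V) (w : word) : C v :=
  match last_syl (state w) v with Some t => t | None => mone (C v) end.

Lemma vtail_gp_eq v w1 w2 : gp_eq E w1 w2 -> vtail v w1 = vtail v w2.
Proof. intros H. unfold vtail. rewrite (state_gp_eq _ _ H). reflexivity. Qed.

Lemma vtail_nil v : vtail v [] = mone (C v).
Proof.
  unfold vtail. rewrite last_syl_None; auto.
  intros t Ht. destruct (Ht v (E_irr v)) as [l e].
  unfold state, proj in e; simpl in e. destruct (dec _); destruct l; discriminate.
Qed.

Lemma vtail_snoc v w (x : C v) : vtail v (w ++ gp_of C x) = mmul (vtail v w) x.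
Proof.
  unfold vtail, gp_of. rewrite state_snoc, act_ltr.
  destruct (state_reduced w) as [W [HW [_ sW]]]. rewrite sW.
  destruct (last_syl (proj W) v) as [t|] eqn:Ht; simpl.
  - apply last_syl_SomeP in Ht.
    destruct (dec (mmul t x = mone (C v))) as [Hz|Hz].
    + rewrite (last_syl_None _ v); auto. apply (reduced_remove_last v t W); auto.
    + rewrite (last_syl_Some _ v (mmul t x)); auto.
      apply ends_with_update_self. intros. eexists; reflexivity.
  - destruct (dec (x = mone (C v))) as [->|Hx].
    + rewrite update_id, Ht, mmul1l. reflexivity.
    + rewrite (last_syl_Some _ v x), mmul1l; auto.
      apply ends_with_update_self. intros. eexists; reflexivity.
Qed.

Lemma vtail_gp_of v (a : C v) : vtail v (gp_of C a) = a.
Proof. rewrite <- (app_nil_l (gp_of C a)), vtail_snoc, vtail_nil. apply mmul1l. Qed.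

Lemma gp_eq_vtail_split v w : exists w', gp_eq E w (w' ++ gp_of C (vtail v w)).
Proof.
  destruct (state_reduced w) as [W [HW [eW sW]]]. unfold vtail. rewrite sW.
  destruct (last_syl (proj W) v) as [t|] eqn:Ht.
  - apply last_syl_SomeP, ends_with_projP in Ht as [A [B [-> HB]]].
    exists (A ++ B). rewrite <- app_assoc.
    eapply rst_trans; [exact eW | apply gp_eq_move_last, HB].
  - exists w. apply rst_sym, gp_eq_one_last.
Qed.

Lemma gp_in_lideal_vtail v (x : C v) w :
  gp_in_lideal E (gp_of C x) w <-> in_lideal x (vtail v w).
Proof.
  split.
  - intros [u Hu]. exists (vtail v u). rewrite (vtail_gp_eq v _ _ Hu). apply vtail_snoc.
  - intros [c Hc]. destruct (gp_eq_vtail_split v w) as [w' Hw'].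
    exists (w' ++ [ltr C c]). rewrite Hc in Hw'.
    eapply rst_trans; [exact Hw'|]. rewrite <- app_assoc.
    apply rst_sym, gp_eq_mul_last.
Qed.

End GraphProductTail.

Theorem lemma2p7
  (V : Type) (E : V -> V -> Prop)
  (E_sym : forall u v, E u v -> E v u)
  (E_irr : forall v, ~ E v v)
  (C : V -> monoid) (HC : forall v, left_LCM (C v))
  (v : V) (x y : C v) :
  ((forall w : C v, ~ (in_lideal x w /\ in_lideal y w)) <->
   (forall w : word C, ~ (gp_in_lideal E (gp_of C x) w /\ gp_in_lideal E (gp_of C y) w)))
  /\
  (forall z : C v,
     (forall w : C v, in_lideal x w /\ in_lideal y w <-> in_lideal z w) ->
     forall w : word C,
       gp_in_lideal E (gp_of C x) w /\ gp_in_lideal E (gp_of C y) w <->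
       gp_in_lideal E (gp_of C z) w).
Proof.
  pose proof (gp_in_lideal_vtail V E E_sym E_irr C v) as Hchar.
  split; [split|].
  - intros Hdis w. rewrite !Hchar. apply Hdis.
  - intros Hdis w. specialize (Hdis (gp_of C w)).
    rewrite !Hchar, vtail_gp_of in Hdis; auto.
  - intros z Hz w. rewrite !Hchar. apply Hz.
Qed.
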